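(* Let $A\in\mathbb{R}^{n\times n}$, $B\in\mathbb{R}^{n\times m}$, $C\in\mathbb{R}^{p\times n}$ with $(A,C)$ observable, $\ell$ its observability index, and $\mathbf{F}_\ell,\mathbf{L}_\ell,\mathbf{B}_\ell,Z_\ell,\mathbf{A}_\ell$ as in the context. If $\mathbf{K}\in\mathbb{R}^{m\times(p\ell+m\ell)}$ is such that $\mathbf{A}_\ell+\mathbf{B}_\ell\mathbf{K}=\mathbf{F}_\ell+\mathbf{L}_\ell Z_\ell+\mathbf{B}_\ell\mathbf{K}$ is Schur, then $(x,\chi)=0$ is globally asymptotically stable for the system $x^+=Ax+Bu$, $y=Cx$, $\chi^+=\mathbf{F}_\ell\chi+\mathbf{L}_\ell y+\mathbf{B}_\ell u$, $u=\mathbf{K}\chi$.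
   Context: A square matrix is Schur if all its eigenvalues lie in the open unit disk. The observability index $\ell$ is the smallest $l$ with $\operatorname{rank}[C;CA;\dots;CA^{l-1}]=n$. $\mathcal{O}_\ell=[C;CA;\dots;CA^{\ell-1}]$; $\mathcal{T}_\ell\in\mathbb{R}^{p\ell\times m\ell}$ block lower triangular with $(i,j)$ block $CA^{i-j-1}B$ if $i>j$ and $0$ otherwise; $\mathcal{R}_\ell=[A^{\ell-1}B\ \cdots\ AB\ B]$; $\mathcal{O}_\ell^{L}$ a fixed left inverse of $\mathcal{O}_\ell$. $\mathbf{F}_\ell=\mathrm{blockdiag}(S_p,S_m)$, $S_q\in\mathbb{R}^{q\ell\times q\ell}$ with blocks $I_q$ at block positions $(i,i+1)$, $i=1,\dots,\ell-1$, zeros elsewhere; $\mathbf{L}_\ell\in\mathbb{R}^{(p\ell+m\ell)\times p}$ with $I_p$ in rows $p\ell-p+1,\dots,p\ell$, zeros elsewhere; $\mathbf{B}_\ell\in\mathbb{R}^{(p\ell+m\ell)\times m}$ with $I_m$ in its last $m$ rows, zeros elsewhere. $Z_\ell=[CA^\ell\mathcal{O}_\ell^L\ \ C\mathcal{R}_\ell-CA^\ell\mathcal{O}_\ell^L\mathcal{T}_\ell]$, $\mathbf{A}_\ell=\mathbf{F}_\ell+\mathbf{L}_\ell Z_\ell$. *)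

From HB Require Import structures.
From mathcomp Require Import all_boot all_order all_algebra.
From mathcomp Require Import all_classical all_reals all_analysis.
From mathcomp Require Import complex.
Set Implicit Arguments. Unset Strict Implicit. Unset Printing Implicit Defensive.
Import Order.TTheory GRing.Theory Num.Theory.
Import numFieldNormedType.Exports.
Local Open Scope ring_scope.

Section Defs.
Variable R : realType.

(* entry (r, c) of M, or 0 if out of range *)
Definition mxget (p q : nat) (M : 'M[R]_(p, q)) (r c : nat) : R :=
  match @insub _ (fun k => k < p)%N _ r, @insub _ (fun k => k < q)%N _ c with
  | Some i, Some j => M i j
  | _, _ => 0
  end.

(* l x l block matrix with p x q blocks Blk i j (0-indexed block positions) *)
Definition blockmx (p q l : nat) (Blk : nat -> nat -> 'M[R]_(p, q))
  : 'M[R]_(p * l, q * l) :=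
  \matrix_(i < p * l, j < q * l)
     mxget (Blk (i %/ p)%N (j %/ q)%N) (i %% p)%N (j %% q)%N.

Definition is_Schur (k : nat) (M : 'M[R]_k) : Prop :=
  forall z : R[i], eigenvalue (map_mx (real_complex R) M) z -> `|z| < 1.

Variables (n m p : nat) (A : 'M[R]_n) (B : 'M[R]_(n, m)) (C : 'M[R]_(p, n)).

(* O_l = [C; CA; ...; CA^(l-1)] *)
Definition obsmx (l : nat) : 'M[R]_(p * l, n) :=
  \matrix_(i < p * l, j < n) mxget (C *m A ^+ (i %/ p)%N) (i %% p)%N j.

Definition observable : Prop := \rank (obsmx n) = n.

Definition is_obs_index (l : nat) : Prop :=
  \rank (obsmx l) = n /\ forall l', (l' < l)%N -> \rank (obsmx l') <> n.

Definition toepmx (l : nat) : 'M[R]_(p * l, m * l) :=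
  blockmx l (fun i j => if (j < i)%N then C *m A ^+ (i - j - 1) *m B else 0).

(* R_l = [A^(l-1) B ... A B  B] *)
Definition reachmx (l : nat) : 'M[R]_(n, m * l) :=
  \matrix_(i < n, j < m * l) mxget (A ^+ (l - 1 - j %/ m)%N *m B) i (j %% m)%N.

Definition shiftmx (q l : nat) : 'M[R]_(q * l) :=
  blockmx l (fun i j => if j == i.+1 then (1%:M : 'M[R]_q) else 0).

Definition Fmx (l : nat) : 'M[R]_(p * l + m * l) :=
  block_mx (shiftmx p l) 0 0 (shiftmx m l).

Definition Lmx (l : nat) : 'M[R]_(p * l + m * l, p) :=
  col_mx (\matrix_(i < p * l, j < p) ((i : nat) == p * l - p + j)%N%:R) 0.

Definition Bmx (l : nat) : 'M[R]_(p * l + m * l, m) :=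
  col_mx 0 (\matrix_(i < m * l, j < m) ((i : nat) == m * l - m + j)%N%:R).

Definition Zmx (l : nat) (OL : 'M[R]_(n, p * l)) : 'M[R]_(p, p * l + m * l) :=
  row_mx (C *m A ^+ l *m OL)
         (C *m reachmx l - C *m A ^+ l *m OL *m toepmx l).

Definition Amx (l : nat) (OL : 'M[R]_(n, p * l)) : 'M[R]_(p * l + m * l) :=
  Fmx l + Lmx l *m Zmx OL.

Definition closed_loop (l : nat) (K : 'M[R]_(m, p * l + m * l))
  (s : 'cV[R]_(n + (p * l + m * l))) : 'cV[R]_(n + (p * l + m * l)) :=
  let x := usubmx s in
  let chi := dsubmx s in
  let u := K *m chi in
  let y := C *m x in
  col_mx (A *m x + B *m u) (Fmx l *m chi + Lmx l *m y + Bmx l *m u).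

End Defs.

Local Open Scope classical_set_scope.
Definition GAS (R : realType) (V : normedModType R) (f : V -> V) : Prop :=
  f 0 = 0 /\
  (forall eps : R, 0 < eps -> exists2 delta : R, 0 < delta &
     forall s : V, `|s| < delta -> forall k : nat, `|iter k f s| < eps) /\
  (forall s : V, (fun k : nat => iter k f s) @ \oo --> (0 : V)).

(* After l steps the controller state chi = (Y, U) stores the last l outputs
   and inputs of the plant.  Such a window satisfies Y = O_l x + T_l U and
   x' = A^l x + R_l U (x the state at its start, x' the state after it), so the
   left inverse O^L recovers the current state linearly: x_k = W chi_k with
   W = [A^l O^L, R_l - A^l O^L T_l].  As Z_l = C W, from then on
   chi_(k+1) = (A_l + B_l K) chi_k, hence the closed-loop matrix Phi satisfies
   Phi^(l+k) = [W; I] (A_l + B_l K)^k (lower block of Phi^l), which tends to 0.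
   Powers of a Schur matrix M vanish: over C, if Q(M) (M - z) M^k -> 0 and
   |z| < 1 then Q(M) M^k -> 0 (a contraction with vanishing forcing term), so
   one peels the eigenvalues off the characteristic polynomial, which
   annihilates M by Cayley-Hamilton. *)

From HB Require Import structures.
From mathcomp Require Import all_boot all_order all_algebra.
From mathcomp Require Import all_classical all_reals all_analysis.
From mathcomp Require Import complex.
From mathcomp Require Import zify lra.
Import Order.TTheory GRing.Theory Num.Theory.
Import numFieldNormedType.Exports.
Set Implicit Arguments. Unset Strict Implicit. Unset Printing Implicit Defensive.
Local Open Scope classical_set_scope.
Local Open Scope ring_scope.

Section NullSequences.
Variable R : realType.

Lemma cvg0_contraction (a b : nat -> R) (c : R) :
  0 <= c < 1 -> (forall k, 0 <= a k) -> (forall k, a k.+1 <= c * a k + b k) ->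
  b @ \oo --> 0 -> a @ \oo --> 0.
Proof.
case/andP=> c_ge0 c_lt1 a_ge0 a_rec b0.
suff a_small (e : R) : 0 < e -> \forall k \near \oo, `|a k| < e by apply/cvgr0Pnorm_lt.
move=> e_gt0.
have e2_gt0 : 0 < e / 2 by rewrite divr_gt0.
have [N _ bN] : \forall k \near \oo, `|b k| < e / 2 * (1 - c).
  by move: b0 => /cvgr0_norm_lt; apply; rewrite mulr_gt0 // subr_gt0.
have aN_tail j : a (N + j)%N <= e / 2 + c ^+ j * a N.
  elim: j => [|j IH]; first by rewrite addn0 expr0 mul1r lerDr ltW.
  have bNj : b (N + j)%N <= e / 2 * (1 - c).
    exact: le_trans (ler_norm _) (ltW (bN _ (leq_addr _ _))).
  have := ler_wpM2l c_ge0 IH; have := a_rec (N + j)%N.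
  rewrite addnS exprS; nra.
have : c ^+ j * a N @[j --> \oo] --> 0.
  by rewrite -(mul0r (a N)); apply: cvgMr_tmp; apply: cvg_expr; rewrite ger0_norm.
move=> /cvgr0_norm_lt /(_ _ e2_gt0) [M _ cM].
exists (N + M)%N => // k /= kNM.
have /cM : (M <= k - N)%N by lia.
rewrite ger0_norm ?mulr_ge0 ?exprn_ge0 // => cMk.
rewrite -(subnKC (leq_trans (leq_addr M N) kNM)) ger0_norm //.
apply: le_lt_trans (aN_tail _) _; lra.
Qed.
End NullSequences.

Section MatrixNorm.
Variable R : realType.

Lemma mx_norm_entry a b (M : 'M[R]_(a, b)) i j : `|M i j| <= `|M|.
Proof.
rewrite [`|M|]/Num.norm /= mx_normrE.
exact: (le_bigmax _ (fun ij : 'I_a * 'I_b => `|M ij.1 ij.2|) (i, j)).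
Qed.

Lemma mx_norm_le a b (M : 'M[R]_(a, b)) (x : R) :
  0 <= x -> (forall i j, `|M i j| <= x) -> `|M| <= x.
Proof.
move=> x_ge0 Mx; rewrite [`|M|]/Num.norm /= mx_normrE.
by apply: bigmax_le => // ij _; apply: Mx.
Qed.

Lemma mx_norm_mulmx a b c (M : 'M[R]_(a, b)) (N : 'M[R]_(b, c)) :
  `|M *m N| <= b%:R * (`|M| * `|N|).
Proof.
apply: mx_norm_le => [|i j]; first by rewrite !mulr_ge0.
rewrite mxE; apply: le_trans (ler_norm_sum _ _ _) _.
have -> : b%:R * (`|M| * `|N|) = \sum_(k < b) `|M| * `|N|.
  by rewrite sumr_const card_ord mulr_natl.
apply: ler_sum => k _.
by rewrite normrM ler_pM ?mx_norm_entry.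
Qed.

Lemma cvg0_mulmx a b c d (G : 'M[R]_(a, b)) (P : 'M[R]_(c, d))
    (S : nat -> 'M[R]_(b, c)) :
  S @ \oo --> (0 : 'M[R]_(b, c)) -> (fun k => G *m S k *m P) @ \oo --> (0 : 'M[R]_(a, d)).
Proof.
move=> S0; pose w := c%:R * b%:R * `|G| * `|P|.
suff : `|G *m S k *m P| @[k --> \oo] --> (0 : R) by exact: norm_cvg0.
apply: (@squeeze_cvgr _ _ _ _ (cst 0) (fun k => w * `|S k|)).
- near=> k; rewrite normr_ge0 /=.
  apply: le_trans (mx_norm_mulmx (G *m S k) P) _.
  rewrite /w -!mulrA ler_wpM2l // [`|P| * _]mulrC !mulrA ler_wpM2r //.
  by rewrite -mulrA mx_norm_mulmx.
- exact: cvg_cst.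
- by rewrite -(mulr0 w); apply: cvgMl_tmp; apply/norm_cvg0P.
Unshelve. all: by end_near.
Qed.

Lemma mx_cvg0_entries a b (S : nat -> 'M[R]_(a, b)) :
  (forall i j, (fun k => S k i j) @ \oo --> (0 : R)) -> S @ \oo --> (0 : 'M[R]_(a, b)).
Proof.
move=> S0; apply/cvgr0Pnorm_lt => e e_gt0.
have : \forall k \near \oo, forall ij : 'I_a * 'I_b, `|S k ij.1 ij.2| < e.
  by apply: filter_forall => ij; move: (S0 ij.1 ij.2) => /cvgr0_norm_lt; apply.
apply: filter_app; near=> k => Sk.
rewrite [`|S k|]/Num.norm /= mx_normrE.
by apply: bigmax_lt => // ij _; apply: Sk.
Unshelve. all: by end_near.
Qed.

End MatrixNorm.

Section LinearStability.
Variable R : realType.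

Lemma iter_mulmx N (M : 'M[R]_N) (s : 'cV[R]_N) k :
  iter k (mulmx M) s = M ^+ k *m s.
Proof.
elim: k => [|k IH]; first by rewrite expr0 mul1mx.
by rewrite iterS IH exprS mulmxA.
Qed.

Lemma GAS_mulmx N (M : 'M[R]_N) :
  (fun k => M ^+ k) @ \oo --> (0 : 'M[R]_N) -> GAS (mulmx M : 'cV[R]_N -> 'cV[R]_N).
Proof.
move=> Mk0; split; first exact: mulmx0.
split; last first.
  move=> s; have := cvg0_mulmx 1%:M s Mk0.
  by under eq_cvg do rewrite mul1mx -iter_mulmx.
have [b b_gt0 Mkb] : exists2 b, 0 < b & forall k, `|M ^+ k| <= b.
  have /cvg_seq_bounded/pinfty_ex_gt0[b b_gt0 Mkb] : cvgn (fun k => M ^+ k).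
    by apply/cvg_ex; exists 0.
  by exists b => // k; apply: Mkb.
pose c := N%:R * b.
have c_ge0 : 0 <= c by rewrite mulr_ge0 // ltW.
move=> e e_gt0; exists (e / (c + 1)); first by rewrite divr_gt0 // ltr_wpDl.
move=> s; rewrite ltr_pdivlMr ?ltr_wpDl // => s_small k.
rewrite iter_mulmx; apply: le_lt_trans (mx_norm_mulmx _ _) _.
have : N%:R * (`|M ^+ k| * `|s|) <= c * `|s|.
  by rewrite mulrA ler_wpM2r // ler_wpM2l.
have := normr_ge0 s; nra.
Qed.

End LinearStability.

Section SchurPowers.
Variable R : realType.
Import Normc.

(* Complex matrix sequences are handled entrywise through the real modulus
   normc, so that every limit is taken in R. *)
Let vanishing a b (S : nat -> 'M[R[i]]_(a, b)) :=
  forall i j, normc (S k i j) @[k --> \oo] --> (0 : R).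

Lemma normc_ge0 (z : R[i]) : 0 <= normc z.
Proof. by case: z => x y; rewrite sqrtr_ge0. Qed.

Lemma vanishing_contraction a b (S E : nat -> 'M[R[i]]_(a, b)) (z : R[i]) :
  normc z < 1 -> (forall k, S k.+1 = z *: S k + E k) -> vanishing E -> vanishing S.
Proof.
move=> z_lt1 S_rec E0 i j.
apply: (@cvg0_contraction _ _ (fun k => normc (E k i j)) (normc z)) => //.
- by rewrite normc_ge0 z_lt1.
- by move=> k; apply: normc_ge0.
- move=> k; rewrite S_rec !mxE -normcM; exact: le_normcD.
Qed.

Lemma vanishing_peel_roots N (M : 'M[R[i]]_N.+1) (r : seq R[i]) (Q : {poly R[i]}) :
  (forall z, z \in r -> normc z < 1) ->
  vanishing (fun k => horner_mx M (Q * \prod_(z <- r) ('X - z%:P)) * M ^+ k) ->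
  vanishing (fun k => horner_mx M Q * M ^+ k).
Proof.
elim: r Q => [|z r IH] Q r_small; first by rewrite big_nil mulr1.
have [z_small r'_small] : normc z < 1 /\ forall y, y \in r -> normc y < 1.
  by split=> [|y ry]; apply: r_small; rewrite inE ?eqxx ?ry ?orbT.
rewrite big_cons mulrA => /(IH _ r'_small); apply: vanishing_contraction z_small _.
move=> k; rewrite rmorphM rmorphB /= horner_mx_X horner_mx_C.
rewrite exprS mulrBr mulrBl mulrA.
rewrite -[horner_mx M Q * z%:M]/(horner_mx M Q *m z%:M) mul_mx_scalar scalerAl.
by rewrite addrC subrK.
Qed.

Lemma Schur_expr_cvg0 N (M : 'M[R]_N) :
  is_Schur M -> (fun k => M ^+ k) @ \oo --> (0 : 'M[R]_N).
Proof.
case: N M => [|N] M SchurM.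
  by under eq_cvg do rewrite flatmx0; apply: cvg_cst.
pose Mc := map_mx (real_complex R) M.
have [r char_Mc] := closed_field_poly_normal (char_poly Mc).
rewrite (monicP (char_poly_monic Mc)) scale1r in char_Mc.
have r_small z : z \in r -> normc z < 1.
  move=> zr; have : eigenvalue Mc z.
    by rewrite eigenvalue_root_char char_Mc root_prod_XsubC.
  by move/SchurM; rewrite normc_def; case: z {zr} => x y; rewrite ltcR.
have Mc_vanish : vanishing (fun k => horner_mx Mc 1 * Mc ^+ k).
  apply: (vanishing_peel_roots r_small); rewrite mul1r -char_Mc Cayley_Hamilton.
  by move=> i j; under eq_cvg do rewrite mul0r mxE normc0; apply: cvg_cst.
apply: mx_cvg0_entries => i j; apply: norm_cvg0.
have := Mc_vanish i j.
by under eq_cvg do rewrite rmorph1 mul1r /Mc -rmorphXn mxE /= expr0n addr0 sqrtr_sqr.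
Qed.

End SchurPowers.

Section BlockIndex.
Local Open Scope nat_scope.

Lemma blk_index_lt q l i c : i < l -> c < q -> i * q + c < q * l.
Proof.
move=> il cq; have : i.+1 * q <= l * q by rewrite leq_mul2r il orbT.
by rewrite mulSn mulnC; lia.
Qed.

Lemma blk_indexK q i c : c < q -> ((i * q + c) %/ q = i) * ((i * q + c) %% q = c).
Proof.
move=> cq; have q_gt0 : 0 < q by apply: leq_ltn_trans cq.
by rewrite divnMDl // divn_small // addn0 modnMDl modn_small.
Qed.

Lemma last_blk_indexE q l i c c' : i < l -> c < q -> c' < q ->
  (i * q + c == q * l - q + c') = (i.+1 == l) && (c == c').
Proof.
move=> il cq c'q; case: (ltngtP i.+1 l) => [i1l|li1|<-].
- have : i.+2 * q <= l * q by rewrite leq_mul2r i1l orbT.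
  by move=> ?; apply/negbTE/eqP; nia.
- lia.
- by rewrite mulnSr addnK (mulnC q) eqn_add2l.
Qed.

End BlockIndex.

Lemma sum_blocks (R : nmodType) q l (F : nat -> R) :
  \sum_(k < q * l) F k = \sum_(t < l) \sum_(c < q) F (t * q + c)%N.
Proof.
elim: l => [|l IH]; first by rewrite muln0 !big_ord0.
rewrite big_ord_recr /= -IH -!(big_mkord xpredT) mulnS addnC.
rewrite (big_cat_nat _ (leq_addr _ _)) //=; congr (_ + _).
rewrite -[X in \sum_(X <= _ < _) _](add0n (q * l)) big_addn addKn big_mkord.
by apply: eq_bigr => c _; rewrite addnC mulnC.
Qed.

Section Blocks.
Variable R : realType.

Lemma mxget_ord a b (M : 'M[R]_(a, b)) (i : 'I_a) (j : 'I_b) : mxget M i j = M i j.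
Proof.
rewrite /mxget; case: insubP => [i' _ /val_inj ->|]; last by rewrite ltn_ord.
by case: insubP => [j' _ /val_inj ->|]; last by rewrite ltn_ord.
Qed.

Lemma mxget_oob a b (M : 'M[R]_(a, b)) r c :
  ~~ ((r < a) && (c < b))%N -> mxget M r c = 0.
Proof.
rewrite negb_and /mxget => /orP[ra|cb]; first by rewrite insubN.
by case: insub => // ?; rewrite insubN.
Qed.

Lemma mxget_matrix a b (E : 'I_a -> 'I_b -> R) r c (ra : (r < a)%N) (cb : (c < b)%N) :
  mxget (\matrix_(i, j) E i j) r c = E (Ordinal ra) (Ordinal cb).
Proof. by rewrite -[r]/(Ordinal ra : nat) -[c]/(Ordinal cb : nat) mxget_ord mxE. Qed.

Lemma mxget_mulmx a b d (M : 'M[R]_(a, b)) (N : 'M[R]_(b, d)) r c :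
  mxget (M *m N) r c = \sum_(k < b) mxget M r k * mxget N k c.
Proof.
have [/andP[ra cd]|out] := boolP ((r < a) && (c < d))%N; last first.
  rewrite mxget_oob // big1 // => k _; move: out; rewrite negb_and => /orP[ra|cd].
    by rewrite [mxget M _ _]mxget_oob ?mul0r // negb_and ra.
  by rewrite [mxget N _ _]mxget_oob ?mulr0 // negb_and cd orbT.
rewrite -[r]/(Ordinal ra : nat) -[c]/(Ordinal cd : nat) mxget_ord mxE.
by apply: eq_bigr => k _; rewrite !mxget_ord.
Qed.

Lemma mxgetD a b (M N : 'M[R]_(a, b)) r c :
  mxget (M + N) r c = mxget M r c + mxget N r c.
Proof.
have [/andP[ra cb]|out] := boolP ((r < a) && (c < b))%N; last by rewrite !mxget_oob ?addr0.
by rewrite -[r]/(Ordinal ra : nat) -[c]/(Ordinal cb : nat) !mxget_ord mxE.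
Qed.

Definition blkrow q l b (i : nat) (M : 'M[R]_(q * l, b)) : 'M[R]_(q, b) :=
  \matrix_(c, j) mxget M (i * q + c)%N j.

Definition blkcol a q l (t : nat) (M : 'M[R]_(a, q * l)) : 'M[R]_(a, q) :=
  \matrix_(r, c) mxget M r (t * q + c)%N.

Lemma blkrowD q l b i (M N : 'M[R]_(q * l, b)) :
  blkrow i (M + N) = blkrow i M + blkrow i N.
Proof. by apply/matrixP => c j; rewrite !mxE mxgetD. Qed.

Lemma blkrow_mulmx q l b d i (M : 'M[R]_(q * l, b)) (N : 'M[R]_(b, d)) :
  blkrow i (M *m N) = blkrow i M *m N.
Proof.
apply/matrixP => c j; rewrite !mxE mxget_mulmx.
by apply: eq_bigr => k _; rewrite mxE mxget_ord.
Qed.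

Lemma mulmx_blocks a q l b (M : 'M[R]_(a, q * l)) (N : 'M[R]_(q * l, b)) :
  M *m N = \sum_(t < l) blkcol t M *m blkrow t N.
Proof.
apply/matrixP => r j; rewrite mxE summxE.
under eq_bigr do rewrite -!mxget_ord.
rewrite (sum_blocks _ _ (fun k => mxget M r k * mxget N k j)).
by apply: eq_bigr => t _; rewrite mxE; apply: eq_bigr => c _; rewrite !mxE.
Qed.

Lemma blkrow_inj q l b (M N : 'M[R]_(q * l, b)) :
  (forall i, (i < l)%N -> blkrow i M = blkrow i N) -> M = N.
Proof.
move=> MN; apply/matrixP => r j; rewrite -!mxget_ord.
have /andP[q_gt0 _] : ((0 < q) && (0 < l))%N.
  by rewrite -muln_gt0 (leq_ltn_trans _ (ltn_ord r)).
have rl : (r %/ q < l)%N by rewrite ltn_divLR // (mulnC l).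
have /matrixP/(_ (Ordinal (ltn_pmod r q_gt0)) j) := MN _ rl.
by rewrite !mxE /= -divn_eq.
Qed.

Lemma blkcol_blkrow_blockmx p q l (Blk : nat -> nat -> 'M[R]_(p, q)) i t :
  (i < l)%N -> (t < l)%N -> blkcol t (blkrow i (blockmx l Blk)) = Blk i t.
Proof.
move=> il tl; apply/matrixP => c c'.
rewrite !mxE (mxget_matrix _ (ltn_ord c) (blk_index_lt tl (ltn_ord c'))) /=.
rewrite (mxget_matrix _ (blk_index_lt il (ltn_ord c)) (blk_index_lt tl (ltn_ord c'))).
by rewrite /= !blk_indexK // mxget_ord.
Qed.

Lemma blkrow_blockmx_mul p q l b (Blk : nat -> nat -> 'M[R]_(p, q))
    (v : 'M[R]_(q * l, b)) i :
  (i < l)%N -> blkrow i (blockmx l Blk *m v) = \sum_(t < l) Blk i t *m blkrow t v.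
Proof.
move=> il; rewrite blkrow_mulmx mulmx_blocks.
by apply: eq_bigr => t _; rewrite blkcol_blkrow_blockmx.
Qed.

Lemma blkrow_shiftmx q l b (v : 'M[R]_(q * l, b)) i : (i < l)%N ->
  blkrow i (shiftmx R q l *m v) = if (i.+1 < l)%N then blkrow i.+1 v else 0.
Proof.
move=> il; rewrite blkrow_blockmx_mul //; case: ltnP => i1l.
  rewrite (bigD1 (Ordinal i1l)) //= eqxx mul1mx big1 ?addr0 // => t.
  by rewrite -val_eqE => /negbTE /= ->; rewrite mul0mx.
by rewrite big1 // => t _; rewrite ltn_eqF ?mul0mx // (leq_trans (ltn_ord t)).
Qed.

(* By definition, Lmx R m p l is col_mx (lastblk p l) 0 and Bmx R m p l is
   col_mx 0 (lastblk m l). *)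
Definition lastblk q l : 'M[R]_(q * l, q) :=
  \matrix_(i < q * l, j < q) ((i : nat) == q * l - q + j)%N%:R.

Lemma blkrow_lastblk q l i : (i < l)%N ->
  blkrow i (lastblk q l) = if i.+1 == l then 1%:M else 0.
Proof.
move=> il; apply/matrixP => c j.
rewrite !mxE (mxget_matrix _ (blk_index_lt il (ltn_ord c)) (ltn_ord j)) /=.
by rewrite last_blk_indexE //; case: (i.+1 == l); rewrite !mxE.
Qed.

End Blocks.

Section Plant.
Variables (R : realType) (n m p : nat).
Variables (A : 'M[R]_n) (B : 'M[R]_(n, m)) (C : 'M[R]_(p, n)).

Lemma blkrow_obsmx l i : (i < l)%N -> blkrow i (obsmx A C l) = C *m A ^+ i.
Proof.
move=> il; apply/matrixP => c j.
rewrite [LHS]mxE (mxget_matrix _ (blk_index_lt il (ltn_ord c)) (ltn_ord j)) /=.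
by rewrite !blk_indexK // mxget_ord.
Qed.

Lemma blkcol_reachmx l t : (t < l)%N -> blkcol t (reachmx A B l) = A ^+ (l - 1 - t) *m B.
Proof.
move=> tl; apply/matrixP => i c.
rewrite [LHS]mxE (mxget_matrix _ (ltn_ord i) (blk_index_lt tl (ltn_ord c))) /=.
by rewrite !blk_indexK // mxget_ord.
Qed.

Lemma blkrow_toepmx_mul l b (U : 'M[R]_(m * l, b)) i : (i < l)%N ->
  blkrow i (toepmx A B C l *m U) =
  \sum_(t < l | (t < i)%N) C *m A ^+ (i - t - 1) *m B *m blkrow t U.
Proof.
move=> il; rewrite blkrow_blockmx_mul // [RHS]big_mkcond /=.
by apply: eq_bigr => t _; case: ifP; rewrite ?mul0mx.
Qed.

Definition reconstructmx l (OL : 'M[R]_(n, p * l)) : 'M[R]_(n, p * l + m * l) :=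
  row_mx (A ^+ l *m OL) (reachmx A B l - A ^+ l *m OL *m toepmx A B C l).

Lemma Zmx_reconstructmx l (OL : 'M[R]_(n, p * l)) : Zmx A B C OL = C *m reconstructmx OL.
Proof. by rewrite /Zmx mul_mx_row mulmxBr !mulmxA. Qed.

Variables (b : nat) (x : nat -> 'M[R]_(n, b)) (u : nat -> 'M[R]_(m, b)).
Hypothesis x_rec : forall k, x k.+1 = A *m x k + B *m u k.

Lemma state_solution a i :
  x (a + i)%N = A ^+ i *m x a + \sum_(t < i) A ^+ (i - 1 - t) *m B *m u (a + t)%N.
Proof.
have mulmxX k : A *m A ^+ k = A ^+ k.+1 := esym (exprS A k).
elim: i => [|i IH]; first by rewrite addn0 expr0 mul1mx big_ord0 addr0.
rewrite addnS x_rec IH big_ord_recr /= mulmxDr mulmx_sumr !mulmxA mulmxX -addrA.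
rewrite subSS subn0 subnn expr0 mul1mx; congr (_ + (_ + _)).
apply: eq_bigr => t _; rewrite !mulmxA mulmxX; congr (_ ^+ _ *m _ *m _).
by have := ltn_ord t; lia.
Qed.

Variables (l a : nat) (Y : 'M[R]_(p * l, b)) (U : 'M[R]_(m * l, b)).
Hypothesis Y_window : forall i, (i < l)%N -> blkrow i Y = C *m x (a + i)%N.
Hypothesis U_window : forall t, (t < l)%N -> blkrow t U = u (a + t)%N.

Lemma window_state : x (a + l)%N = A ^+ l *m x a + reachmx A B l *m U.
Proof.
rewrite state_solution mulmx_blocks; congr (_ + _).
by apply: eq_bigr => t _; rewrite blkcol_reachmx // U_window.
Qed.

Lemma window_output : Y = obsmx A C l *m x a + toepmx A B C l *m U.
Proof.
apply: blkrow_inj => i il.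
rewrite blkrowD blkrow_toepmx_mul // blkrow_mulmx blkrow_obsmx // Y_window //.
rewrite state_solution mulmxDr mulmxA mulmx_sumr; congr (_ + _).
pose F t := C *m (A ^+ (i - 1 - t) *m B *m u (a + t)%N).
rewrite (big_ord_widen l F (ltnW il)); apply: eq_bigr => t ti.
by rewrite /F U_window // !mulmxA subnAC.
Qed.

Lemma window_reconstruction (OL : 'M[R]_(n, p * l)) :
  OL *m obsmx A C l = 1%:M -> reconstructmx OL *m col_mx Y U = x (a + l)%N.
Proof.
move=> OL_left_inv; rewrite mul_row_col window_output window_state.
rewrite mulmxDr mulmxBl !mulmxA -[A ^+ l *m OL *m _]mulmxA OL_left_inv mulmx1.
by rewrite -addrA [_ *m U + _]addrC subrK.
Qed.

End Plant.

Section ShiftRegister.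
Variables (R : realType) (q l b : nat).
Variables (reg : nat -> 'M[R]_(q * l, b)) (w : nat -> 'M[R]_(q, b)).
Hypothesis reg_rec : forall k, reg k.+1 = shiftmx R q l *m reg k + lastblk R q l *m w k.

Lemma register_window k i :
  (i < l)%N -> (l <= i + k)%N -> blkrow i (reg k) = w (i + k - l)%N.
Proof.
elim: k i => [|k IH] i il ilk; first by move: ilk; rewrite addn0 leqNgt il.
rewrite reg_rec blkrowD blkrow_shiftmx // blkrow_mulmx blkrow_lastblk //.
case: ltngtP => [i1l|li1|i1l].
- by rewrite mul0mx addr0 IH // addSnnS.
- lia.
- by rewrite mul1mx add0r -i1l addnS subSS addKn.
Qed.

End ShiftRegister.

Section ClosedLoop.
Variables (R : realType) (n m p l : nat).
Variables (A : 'M[R]_n) (B : 'M[R]_(n, m)) (C : 'M[R]_(p, n)).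
Variables (OL : 'M[R]_(n, p * l)) (K : 'M[R]_(m, p * l + m * l)).

Definition clmx : 'M[R]_(n + (p * l + m * l)) :=
  block_mx A (B *m K) (Lmx R m p l *m C) (Fmx R m p l + Bmx R m p l *m K).

Lemma closed_loopE : closed_loop A B C K = mulmx clmx.
Proof.
apply: funext => s; rewrite /closed_loop -[s in RHS]vsubmxK mul_block_col.
by rewrite mulmxDl !mulmxA -addrA addrCA.
Qed.

Let x k := usubmx (clmx ^+ k).
Let chi k := dsubmx (clmx ^+ k).
Let u k := K *m chi k.

Lemma clmx_exprS k : clmx ^+ k.+1 = col_mx (A *m x k + B *m u k)
  (Fmx R m p l *m chi k + Lmx R m p l *m (C *m x k) + Bmx R m p l *m u k).
Proof.
rewrite exprS -[clmx ^+ k]vsubmxK -/(x k) -/(chi k) [clmx * _]mul_block_col.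
by rewrite mulmxDl !mulmxA -addrA addrCA.
Qed.

Lemma clmx_state_rec k : x k.+1 = A *m x k + B *m u k.
Proof. by rewrite /x clmx_exprS col_mxKu. Qed.

Lemma clmx_output_register k : usubmx (chi k.+1) =
  shiftmx R p l *m usubmx (chi k) + lastblk R p l *m (C *m x k).
Proof.
rewrite {1}/chi clmx_exprS col_mxKd /Fmx /Lmx /Bmx -{1}[chi k]vsubmxK.
by rewrite mul_block_col !mul_col_mx !add_col_mx col_mxKu !mul0mx !addr0.
Qed.

Lemma clmx_input_register k : dsubmx (chi k.+1) =
  shiftmx R m l *m dsubmx (chi k) + lastblk R m l *m u k.
Proof.
rewrite {1}/chi clmx_exprS col_mxKd /Fmx /Lmx /Bmx -{1}[chi k]vsubmxK.
by rewrite mul_block_col !mul_col_mx !add_col_mx col_mxKd !mul0mx add0r addr0.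
Qed.

Hypothesis OL_left_inv : OL *m obsmx A C l = 1%:M.

Let Mcl := Amx A B C OL + Bmx R m p l *m K.

Lemma clmx_reconstruct k :
  reconstructmx A B C OL *m chi (l + k) = x (l + k)%N.
Proof.
rewrite -[chi _]vsubmxK (addnC l k).
apply: (window_reconstruction (a := k) clmx_state_rec) => // i il.
  rewrite (register_window clmx_output_register) ?(addnA i k l) ?leq_addl //.
  by rewrite addnK (addnC i k).
rewrite (register_window clmx_input_register) ?(addnA i k l) ?leq_addl //.
by rewrite addnK (addnC i k).
Qed.

Lemma clmx_chi_step k : chi (l + k).+1 = Mcl *m chi (l + k).
Proof.
rewrite /chi clmx_exprS col_mxKd -/(chi _) -clmx_reconstruct.
by rewrite /Mcl /Amx /u Zmx_reconstructmx !mulmxDl !mulmxA.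
Qed.

Lemma clmx_expr_shift k :
  clmx ^+ (l + k) = col_mx (reconstructmx A B C OL) 1%:M *m Mcl ^+ k *m chi l.
Proof.
have chi_iter : chi (l + k) = Mcl ^+ k *m chi l.
  elim: k => [|k IH]; first by rewrite addn0 expr0 mul1mx.
  by rewrite addnS clmx_chi_step IH exprS mulmxA.
rewrite -[clmx ^+ _]vsubmxK -/(x _) -/(chi _) -clmx_reconstruct chi_iter.
by rewrite -mulmxA mul_col_mx mul1mx.
Qed.

End ClosedLoop.

Theorem lemma8 (R : realType) (n m p : nat)
  (A : 'M[R]_n) (B : 'M[R]_(n, m)) (C : 'M[R]_(p, n)) (l : nat)
  (OL : 'M[R]_(n, p * l)) (K : 'M[R]_(m, p * l + m * l)) :
  observable A C ->
  is_obs_index A C l ->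
  OL *m obsmx A C l = 1%:M ->
  is_Schur ((Amx A B C OL + Bmx R m p l *m K : 'M[R]_(p * l + m * l))) ->
  GAS (closed_loop A B C K).
Proof.
move=> _ _ OL_left_inv Schur_cl.
rewrite closed_loopE; apply: GAS_mulmx.
suff : [sequence clmx A B C K ^+ (k + l)]_k @ \oo --> (0 : 'M[R]_(n + (p * l + m * l))).
  by rewrite cvg_shiftn.
under eq_cvg => k do rewrite /= (addnC k l) (clmx_expr_shift _ _ OL_left_inv).
exact: cvg0_mulmx (Schur_expr_cvg0 Schur_cl).
Qed.
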